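(* Let $K_{5,6}$ be the complete bipartite graph with bipartition $(X,Y)$, $X=\{x_1,\dots,x_5\}$, $Y=\{y_1,\dots,y_6\}$, and let $S=\{x_1,x_2,y_1,y_2\}$. Then $\kappa^*_{K_{5,6}}(S)=4$.
   Context: For $S\subseteq V(G)$ with $|S|\ge 2$, an $S$-Steiner tree of $G$ is a subtree $T$ of $G$ with $S\subseteq V(T)$ all of whose leaves belong to $S$. A family of $S$-Steiner trees $T_1,\dots,T_k$ is completely independent if for all $1\le p<q\le k$: $E(T_p)\cap E(T_q)=\emptyset$, $V(T_p)\cap V(T_q)=S$, and for any two vertices $x_1,x_2\in S$ the $(x_1,x_2)$-paths in $T_p$ and in $T_q$ are internally disjoint. $\kappa^*_G(S)$ is the maximum number of trees in a completely independent family of $S$-Steiner trees in $G$. *)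

From mathcomp Require Import all_boot.
Set Implicit Arguments. Unset Strict Implicit. Unset Printing Implicit Defensive.

Section Steiner.
Variables (T : finType) (G : rel T).

Definition is_graph_edge (e : {set T}) : bool :=
  [exists u, exists v, [&& u != v, G u v & e == [set u; v]]].

Definition eadj (E : {set {set T}}) : rel T :=
  fun a b => (a != b) && ([set a; b] \in E).

(* p is (the tail of) a path x = x :: p ... y using only edges of E *)
Definition path_in (E : {set {set T}}) (x y : T) (p : seq T) : bool :=
  [&& path (eadj E) x p, last x p == y & uniq (x :: p)].

Definition is_cycle_in (E : {set {set T}}) (c : seq T) : bool :=
  [&& 2 < size c, uniq c & cycle (eadj E) c].

Definition is_subtree (VT : {set T}) (ET : {set {set T}}) : Prop :=
  [/\ forall e, e \in ET -> is_graph_edge e && (e \subset VT),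
      forall u v, u \in VT -> v \in VT -> exists p, path_in ET u v p
    & forall c, ~~ is_cycle_in ET c].

Definition tree_deg (ET : {set {set T}}) (v : T) : nat := #|[set e in ET | v \in e]|.

Definition steiner_tree (S : {set T}) (t : {set T} * {set {set T}}) : Prop :=
  [/\ is_subtree t.1 t.2, S \subset t.1 &
      forall v, v \in t.1 -> tree_deg t.2 v = 1 -> v \in S].

Definition compl_indep (S : {set T}) (k : nat)
    (F : 'I_k -> {set T} * {set {set T}}) : Prop :=
  (forall i, steiner_tree S (F i)) /\
  (forall i j, i != j ->
     [/\ (F i).2 :&: (F j).2 = set0,
         (F i).1 :&: (F j).1 = S &
         forall x1 x2 p1 p2, x1 \in S -> x2 \in S ->
           path_in (F i).2 x1 x2 p1 -> path_in (F j).2 x1 x2 p2 ->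
           forall v, v \in x1 :: p1 -> v \in x1 :: p2 -> v = x1 \/ v = x2]).

Definition kappa_star_eq (S : {set T}) (n : nat) : Prop :=
  (exists F : 'I_n -> {set T} * {set {set T}}, compl_indep S F) /\
  (forall k (F : 'I_k -> {set T} * {set {set T}}), compl_indep S F -> k <= n).

End Steiner.

Definition K56V : finType := ('I_5 + 'I_6)%type.
Definition K56 : rel K56V := fun u v =>
  match u, v with inl _, inr _ | inr _, inl _ => true | _, _ => false end.

Definition x_ (i : nat) : K56V := inl (inord i).
Definition y_ (i : nat) : K56V := inr (inord i).
(* S = {x1, x2, y1, y2} (0-based indices 0,1) *)
Definition S56 : {set K56V} := [set x_ 0; x_ 1; y_ 0; y_ 1].

From mathcomp Require Import all_boot zify.
Set Implicit Arguments. Unset Strict Implicit. Unset Printing Implicit Defensive.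

(* Write S = {x0, x1, y0, y1} and let X, Y be the two sides.
   Four trees: for (a, b) = (x2, y2), (x3, y3), (x4, y4) the double star with
   edges a y0, a y1, b x0, b x1, a b, in which every vertex of S is a leaf, and
   the path y0 x0 y1 x1.
   At most four: for s, t in S on the same side, the vertex following s on the
   s-t path of a tree lies on the other side, hence is an inner vertex of that
   path, so these first steps differ from tree to tree.  The first steps from
   y0 towards y1 thus inject the family into X, giving k <= 5.  If k = 5 they
   exhaust X, which forces x0 y0, x0 y1 into one tree a and x1 y0, x1 y1 into
   another tree b; the first steps from x0 towards x1 (from x1 towards x0 in
   tree a) then inject the family into Y minus {y0, y1}, giving k <= 4. *)

Section TreePaths.
Variable T : finType.
Implicit Types (E : {set {set T}}) (V : {set T}) (a b h u v w : T) (p q c : seq T).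

Lemma set2_eqE a b u v :
  ([set a; b] == [set u; v]) = (a == u) && (b == v) || (a == v) && (b == u).
Proof.
apply/idP/idP => [/eqP E|]; last first.
  by case/orP=> /andP [/eqP -> /eqP ->]; rewrite // setUC.
move: (set21 a b) (set22 a b) (set21 u v) (set22 u v).
rewrite {1 2}E -{3 4}E !inE.
have [-> _|_ /= /eqP -> _ /eqP ->] := eqVneq a u; last by rewrite !eqxx.
have [//|_] := eqVneq b v; rewrite !orbF => /eqP -> _ /eqP ->.
by rewrite !eqxx.
Qed.

Lemma eadj_sym E : symmetric (eadj E).
Proof. by move=> a b; rewrite /eadj eq_sym setUC. Qed.

Lemma path_in_rev E a b p : path_in E a b p ->
  exists2 q, path_in E b a q & a :: p =i b :: q.
Proof.
case/and3P=> pth /eqP lst uq.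
have rev_ap : rev (a :: p) = b :: rev (belast a p) by rewrite lastI rev_rcons lst.
exists (rev (belast a p)); last by move=> v; rewrite -rev_ap mem_rev.
apply/and3P; split; last by rewrite -rev_ap rev_uniq.
- have := rev_path (eadj E) a p; rewrite lst => ->.
  by rewrite (@eq_path _ _ (eadj E)) // => x y; rewrite eadj_sym.
- by rewrite -[_ == a]/(last b (b :: _) == a) -rev_ap rev_cons last_rcons.
Qed.

Lemma path_in_inner_nbrs E a b p v : path_in E a b p -> v \in p -> v != b ->
  exists u w, [/\ u != w, eadj E v u & eadj E v w].
Proof.
case/and3P=> pth /eqP lst uq /splitPr vp; case: vp pth lst uq => p1 p2.
rewrite cat_path last_cat -cat_cons cat_uniq => /andP [_ /= /andP [Ev]].
case: p2 => [_ /= -> _|w p2 /andP [Evw _] _ /and3P [_ /norP [_ /norP [wNp1 _]] _] _];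
  first by rewrite eqxx.
exists (last a p1), w; split => //; last by rewrite eadj_sym.
by apply: contraNneq wNp1 => <-; rewrite mem_last.
Qed.

Lemma cycle_nbrs E c v : is_cycle_in E c -> v \in c ->
  exists u w, [/\ u != w, eadj E v u & eadj E v w].
Proof.
case/and3P=> sz uq cy /rot_to [i s rot_c].
move: cy uq sz; rewrite -(rot_cycle i) -(rot_uniq i) -(size_rot i) rot_c.
case: s {rot_c} => [|w [|z s]] //= /andP [Evw]; rewrite rcons_path.
case/andP=> _ /andP [_ Ezv] /andP [_ /andP [wNzs _]] _.
exists w, (last z s); split => //; last by rewrite eadj_sym.
by apply: contraNneq wNzs => ->; rewrite mem_last.
Qed.

Lemma eadj_sub E V u v :
  (forall e, e \in E -> e \subset V) -> eadj E u v -> (u \in V) && (v \in V).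
Proof. by move=> EV /andP [_ /EV]; rewrite subUset !sub1set. Qed.

Lemma path_in_sub E V a b p v : (forall e, e \in E -> e \subset V) ->
  path_in E a b p -> v \in p -> v \in V.
Proof.
move=> EV /and3P [pth _ _] /splitPr vp; case: vp pth => p1 p2.
by rewrite cat_path /= => /and3P [_ /(eadj_sub EV) /andP [_ ->]].
Qed.

Lemma path_in_of_hub E V h : (forall v, v \in V -> connect (eadj E) v h) ->
  forall u v, u \in V -> v \in V -> exists p, path_in E u v p.
Proof.
move=> to_h u v uV vV.
have /connectP [p pth ->] : connect (eadj E) u v.
  apply: connect_trans (to_h _ uV) _.
  by rewrite (sym_connect_sym (@eadj_sym E)) to_h.
by have [q qpth quq _] := shortenP pth; exists q; apply/and3P.
Qed.

Lemma acyclic_of_branch2 E a b :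
  (forall v u w, u != w -> eadj E v u -> eadj E v w -> v \in [:: a; b]) ->
  forall c, ~~ is_cycle_in E c.
Proof.
move=> branch c; apply/negP => cyc.
have sub : {subset c <= [:: a; b]}.
  by move=> v /(cycle_nbrs cyc) [u [w [uw Evu Evw]]]; apply: branch Evu Evw.
case/and3P: cyc => sz uq _.
by have := uniq_leq_size uq sub; rewrite leqNgt sz.
Qed.

Lemma tree_deg_gt1 E v e1 e2 : e1 \in E -> e2 \in E -> v \in e1 -> v \in e2 ->
  e1 != e2 -> 1 < tree_deg E v.
Proof.
move=> e1E e2E ve1 ve2 e12; have <- : #|[set e1; e2]| = 2 by rewrite cards2 e12.
by apply: subset_leq_card; apply/subsetP => e; rewrite !inE => /orP [] /eqP ->;
  apply/andP.
Qed.

Lemma leaf_paths_meet_at_ends E1 E2 V1 V2 S :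
  (forall e, e \in E1 -> e \subset V1) -> (forall e, e \in E2 -> e \subset V2) ->
  V1 :&: V2 = S ->
  (forall s u w, s \in S -> eadj E1 s u -> eadj E1 s w -> u = w) ->
  forall x1 x2 p1 p2, path_in E1 x1 x2 p1 -> path_in E2 x1 x2 p2 ->
  forall v, v \in x1 :: p1 -> v \in x1 :: p2 -> v = x1 \/ v = x2.
Proof.
move=> E1V E2V V12 leaf x1 x2 p1 p2 pth1 pth2 v.
rewrite !inE; have [->|_] := eqVneq v x1; first by left.
have [->|vx2] /= := eqVneq v x2; first by right.
move=> vp1 vp2; have vS : v \in S.
  by rewrite -V12 inE (path_in_sub E1V pth1) ?(path_in_sub E2V pth2).
have [u [w [uw Evu Evw]]] := path_in_inner_nbrs pth1 vp1 vx2.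
by move: uw; rewrite (leaf _ _ _ vS Evu Evw) eqxx.
Qed.

Variable G : rel T.

Lemma graph_edge_set2 u v : u != v -> G u v -> is_graph_edge G [set u; v].
Proof.
by move=> uv Guv; apply/existsP; exists u; apply/existsP; exists v; rewrite uv Guv eqxx.
Qed.

Lemma eadj_graph E a b : (forall e, e \in E -> is_graph_edge G e) ->
  eadj E a b -> G a b || G b a.
Proof.
move=> EG /andP [_ /EG /existsP [u /existsP [v /and3P [_ Guv]]]].
by rewrite eq_sym set2_eqE => /orP [] /andP [/eqP <- /eqP <-]; rewrite Guv ?orbT.
Qed.

End TreePaths.

Section BipartiteBound.
Variables (T : finType) (G : rel T) (side : T -> bool).
Hypothesis G_bipartite : forall u v, G u v -> side u != side v.
Variables (S : {set T}) (k : nat) (F : 'I_k -> {set T} * {set {set T}}).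
Hypothesis F_indep : compl_indep G S F.
Implicit Types (i j : 'I_k) (s t u : T).

Definition first_step i s t u : Prop := exists p, path_in (F i).2 s t (u :: p).

Lemma first_step_exists i s t : s \in S -> t \in S -> s != t ->
  exists u, first_step i s t u.
Proof.
have [/(_ i) [[_ conn _] /subsetP SF _] _] := F_indep.
move=> sS tS st; have [[|u p] pth] := conn s t (SF s sS) (SF t tS).
  by case/and3P: pth st => _ /= /eqP -> _; rewrite eqxx.
by exists u, p.
Qed.

Lemma first_step_fun s t : s \in S -> t \in S -> s != t ->
  exists f : 'I_k -> T, forall i, first_step i s t (f i).
Proof.
by move=> sS tS st; apply: fin_all_exists (fun i => first_step_exists i sS tS st).
Qed.

Lemma first_step_eadj i s t u : first_step i s t u -> eadj (F i).2 s u.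
Proof. by case=> p /and3P [/= /andP []]. Qed.

Lemma first_step_side i s t u : first_step i s t u -> side u = ~~ side s.
Proof.
have [/(_ i) [[FE _ _] _ _] _] := F_indep.
have FG e : e \in (F i).2 -> is_graph_edge G e by move/FE/andP => [].
move/first_step_eadj/(eadj_graph FG).
by case/orP=> /G_bipartite; case: (side s); case: (side u).
Qed.

Lemma tree_edge_owner i j e : e \in (F i).2 -> e \in (F j).2 -> i = j.
Proof.
move=> ei ej; apply/eqP; apply: contraT => ij.
have [_ /(_ i j ij) [disj _ _]] := F_indep.
by have := in_set0 e; rewrite -disj inE ei ej.
Qed.

Lemma first_step_owner i j s t u :
  first_step i s t u -> [set u; s] \in (F j).2 -> i = j.
Proof. by move/first_step_eadj/andP => [_ ei]; rewrite setUC; apply: tree_edge_owner. Qed.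

Lemma first_step_private i j s t u q : s \in S -> t \in S -> side s = side t ->
  first_step i s t u -> path_in (F j).2 s t q -> u \in s :: q -> i = j.
Proof.
move=> sS tS sst fst qpth uq; apply/eqP; apply: contraT => ij.
have [_ /(_ i j ij) [_ _ private]] := F_indep.
have [p ppth] := fst; have su := first_step_side fst.
have up : u \in s :: u :: p by rewrite !inE eqxx orbT.
have [us|ut] := private s t _ q sS tS ppth qpth u up uq.
  by move: su; rewrite us; case: (side s).
by move: su; rewrite ut sst; case: (side t).
Qed.

Lemma first_step_inj i j s t u : s \in S -> t \in S -> side s = side t ->
  first_step i s t u -> first_step j s t u -> i = j.
Proof.
move=> sS tS sst fi [q qpth]; apply: first_step_private sS tS sst fi qpth _.
by rewrite !inE eqxx orbT.
Qed.

Lemma first_step_rev_inj i j s t u : s \in S -> t \in S -> side s = side t ->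
  first_step i s t u -> first_step j t s u -> i = j.
Proof.
move=> sS tS sst fi [q /path_in_rev [q' q'pth qq']].
by apply: first_step_private sS tS sst fi q'pth _; rewrite -qq' !inE eqxx orbT.
Qed.

Variables x0 x1 y0 y1 : T.
Hypotheses (x0S : x0 \in S) (x1S : x1 \in S) (y0S : y0 \in S) (y1S : y1 \in S).
Hypotheses (x0X : side x0) (x1X : side x1) (y0Y : ~~ side y0) (y1Y : ~~ side y1).
Hypotheses (x01 : x0 != x1) (y01 : y0 != y1).

Lemma first_steps_from_y0 : exists f : 'I_k -> T,
  [/\ injective f, forall i, side (f i) & forall i, first_step i y0 y1 (f i)].
Proof.
have [f f_step] := first_step_fun y0S y1S y01.
have sy : side y0 = side y1 by rewrite (negPf y0Y) (negPf y1Y).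
exists f; split=> // [i j fij|i].
- by apply: first_step_inj y0S y1S sy (f_step i) _; rewrite fij.
- by rewrite (first_step_side (f_step i)) y0Y.
Qed.

Lemma card_le_side : k <= #|[set v | side v]|.
Proof.
have [f [f_inj fX _]] := first_steps_from_y0.
rewrite -[k]card_ord -(card_imset _ f_inj); apply: subset_leq_card.
by apply/subsetP => _ /imsetP [i _ ->]; rewrite inE fX.
Qed.

Definition hub_trees a b : Prop :=
  [/\ a != b, [set y0; x0] \in (F a).2, [set y1; x0] \in (F a).2,
      [set y0; x1] \in (F b).2 & [set y1; x1] \in (F b).2].

(* The first steps from [y0] then exhaust the [x]-side, so in each tree the
   first step from [y1] towards [y0] is the same vertex. *)
Lemma hub_trees_of_card_side : k = #|[set v | side v]| -> exists a b, hub_trees a b.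
Proof.
move=> k_eq; have [f [f_inj fX f_step]] := first_steps_from_y0.
have sy : side y0 = side y1 by rewrite (negPf y0Y) (negPf y1Y).
have y10 : y1 != y0 by rewrite eq_sym.
have [g g_step] := first_step_fun y1S y0S y10.
have f_onto x : side x -> exists i, f i = x.
  have /eqP im : f @: setT == [set v | side v].
    rewrite eqEcard card_imset // cardsT card_ord -k_eq leqnn andbT.
    by apply/subsetP => _ /imsetP [i _ ->]; rewrite inE fX.
  move=> xX; have /imsetP [i _ ->] : x \in f @: setT by rewrite im inE.
  by exists i.
have gf i : g i = f i.
  have giX : side (g i) by rewrite (first_step_side (g_step i)) y1Y.
  have [j fj] := f_onto _ giX.
  by rewrite -fj; congr f; apply: first_step_rev_inj y0S y1S sy (f_step j) _; rewrite fj.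
have [a fa] := f_onto x0 x0X; have [b fb] := f_onto x1 x1X.
exists a, b; split.
- by apply: contraNneq x01 => ab; rewrite -fa -fb ab.
- by case/andP: (first_step_eadj (f_step a)); rewrite fa.
- by case/andP: (first_step_eadj (g_step a)); rewrite gf fa.
- by case/andP: (first_step_eadj (f_step b)); rewrite fb.
- by case/andP: (first_step_eadj (g_step b)); rewrite gf fb.
Qed.

(* The edges at [x0] towards [y0], [y1] belong to tree [a], so every other tree
   leaves [x0] through a third [y]-vertex, and tree [a] does so from [x1]. *)
Lemma card_other_side_of_hub_trees a b :
  hub_trees a b -> k + 2 <= #|[set v | ~~ side v]|.
Proof.
case=> ab y0a y1a y0b y1b.
have sx : side x0 = side x1 by rewrite x0X x1X.
have x10 : x1 != x0 by rewrite eq_sym.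
have [h h_step] := first_step_fun x0S x1S x01.
have [h' h'_step] := first_step_fun x1S x0S x10.
pose phi i := if i == a then h' i else h i.
have phiY i : phi i \in [set v | ~~ side v] :\ y0 :\ y1.
  rewrite /phi; case: (eqVneq i a) => [->|ia]; rewrite !inE.
  - rewrite (first_step_side (h'_step a)) x1X andbT.
    by apply/andP; split; apply: contra_neq ab => hy;
      apply: first_step_owner (h'_step a) _; rewrite hy.
  - rewrite (first_step_side (h_step i)) x0X andbT.
    by apply/andP; split; apply: contra_neq ia => hy;
      apply: first_step_owner (h_step i) _; rewrite hy.
have phi_inj : injective phi.
  move=> i j; rewrite /phi.
  case: (eqVneq i a) => [->|ia]; case: (eqVneq j a) => [->|ja] // e.
  - by apply/esym/(first_step_rev_inj x0S x1S sx (h_step j)); rewrite -e.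
  - by apply: (first_step_rev_inj x0S x1S sx (h_step i)); rewrite e.
  - by apply: (first_step_inj x0S x1S sx (h_step i)); rewrite e.
have phi_sub : phi @: setT \subset [set v | ~~ side v] :\ y0 :\ y1.
  by apply/subsetP => _ /imsetP [i _ ->].
have := subset_leq_card phi_sub; rewrite card_imset // cardsT card_ord.
rewrite (cardsD1 y0 [set v | ~~ side v]) (cardsD1 y1 ([set v | ~~ side v] :\ y0)).
by rewrite !inE y0Y y1Y eq_sym y01 addn2 add1n.
Qed.

Lemma compl_indep_bipartite_bound :
  k < #|[set v | side v]| \/ k + 2 <= #|[set v | ~~ side v]|.
Proof.
have := card_le_side; rewrite leq_eqVlt => /orP [/eqP/hub_trees_of_card_side|];
  last by left.
by case=> a [b /card_other_side_of_hub_trees]; right.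
Qed.

End BipartiteBound.

Definition is_inl (A B : Type) (v : A + B) : bool := if v is inl _ then true else false.

Lemma card_is_inl (A B : finType) : #|[set v : A + B | is_inl v]| = #|A|.
Proof.
have -> : [set v : A + B | is_inl v] = inl @: [set: A].
  apply/setP => -[x|y]; rewrite inE /=; first by rewrite imset_f.
  by apply/esym/imsetP => -[].
by rewrite card_imset ?cardsT //; apply: inl_inj.
Qed.

Lemma card_not_is_inl (A B : finType) : #|[set v : A + B | ~~ is_inl v]| = #|B|.
Proof.
have -> : [set v : A + B | ~~ is_inl v] = inr @: [set: B].
  apply/setP => -[x|y]; rewrite inE /=; last by rewrite imset_f.
  by apply/esym/imsetP => -[].
by rewrite card_imset ?cardsT //; apply: inr_inj.
Qed.

Lemma K56_bipartite u v : K56 u v -> is_inl u != is_inl v.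
Proof. by case: u v => [?|?] [?|?]. Qed.

Notation X0 := (inl (@Ordinal 5 0 isT) : K56V).
Notation X1 := (inl (@Ordinal 5 1 isT) : K56V).
Notation X2 := (inl (@Ordinal 5 2 isT) : K56V).
Notation X3 := (inl (@Ordinal 5 3 isT) : K56V).
Notation X4 := (inl (@Ordinal 5 4 isT) : K56V).
Notation Y0 := (inr (@Ordinal 6 0 isT) : K56V).
Notation Y1 := (inr (@Ordinal 6 1 isT) : K56V).
Notation Y2 := (inr (@Ordinal 6 2 isT) : K56V).
Notation Y3 := (inr (@Ordinal 6 3 isT) : K56V).
Notation Y4 := (inr (@Ordinal 6 4 isT) : K56V).
Notation Y5 := (inr (@Ordinal 6 5 isT) : K56V).

Lemma S56E : S56 = [set X0; X1; Y0; Y1].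
Proof. by apply/setP => v; rewrite !inE /x_ /y_ !(@inord_val _ (Ordinal _)). Qed.

Lemma K56V_ind (P : K56V -> Prop) : P X0 -> P X1 -> P X2 -> P X3 -> P X4 ->
  P Y0 -> P Y1 -> P Y2 -> P Y3 -> P Y4 -> P Y5 -> forall v, P v.
Proof.
move=> ? ? ? ? ? ? ? ? ? ? ?.
by case=> [[[|[|[|[|[|m]]]]] lt_m]|[[|[|[|[|[|[|m]]]]]] lt_m]] //;
  rewrite (bool_irrelevance lt_m isT).
Qed.

Definition double_star (a b : K56V) : {set K56V} * {set {set K56V}} :=
  ([set X0; X1; Y0; Y1; a; b],
   [set [set a; Y0]; [set a; Y1]; [set b; X0]; [set b; X1]; [set a; b]]).

Definition S56_path : {set K56V} * {set {set K56V}} :=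
  ([set X0; X1; Y0; Y1], [set [set Y0; X0]; [set X0; Y1]; [set Y1; X1]]).

Definition star_centres (a b : K56V) := (a, b) \in [:: (X2, Y2); (X3, Y3); (X4, Y4)].

Ltac star_cases ab := let ea := fresh in let eb := fresh in
  move: ab; rewrite /star_centres !inE => /or3P [] /eqP [ea eb]; rewrite ?ea ?eb.

Ltac case_eq_disj := let H := fresh in
  move=> H; repeat (case/orP: H => H); move/eqP: H => ->.

Section DoubleStar.
Variables a b : K56V.
Hypothesis ab : star_centres a b.

Lemma double_star_edges e : e \in (double_star a b).2 ->
  is_graph_edge K56 e && (e \subset (double_star a b).1).
Proof.
star_cases ab; case_eq_disj;
  by rewrite graph_edge_set2 // subUset !sub1set !inE.
Qed.

Lemma double_star_sub e : e \in (double_star a b).2 -> e \subset (double_star a b).1.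
Proof. by move/double_star_edges/andP => []. Qed.

Definition S56_nbr (s : K56V) : K56V := if s is inl _ then b else a.

Lemma double_star_S56_nbr s u :
  s \in S56 -> eadj (double_star a b).2 s u -> u = S56_nbr s.
Proof.
rewrite /S56_nbr S56E; star_cases ab; case_eq_disj;
  elim/K56V_ind: u; rewrite /eadj !inE !set2_eqE //=.
Qed.

Lemma double_star_leaf s u w : s \in S56 ->
  eadj (double_star a b).2 s u -> eadj (double_star a b).2 s w -> u = w.
Proof. by move=> sS /(double_star_S56_nbr sS) -> /(double_star_S56_nbr sS) ->. Qed.

Lemma double_star_connected u v :
  u \in (double_star a b).1 -> v \in (double_star a b).1 ->
  exists p, path_in (double_star a b).2 u v p.
Proof.
move: u v; apply: (path_in_of_hub (h := a)) => v.
have ba : eadj (double_star a b).2 b a by star_cases ab; rewrite /eadj !inE !set2_eqE.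
have xb x : x \in [:: X0; X1] -> eadj (double_star a b).2 x b.
  by star_cases ab; case_eq_disj; rewrite /eadj !inE !set2_eqE.
have ya y : y \in [:: Y0; Y1] -> eadj (double_star a b).2 y a.
  by star_cases ab; case_eq_disj; rewrite /eadj !inE !set2_eqE.
rewrite !inE; case_eq_disj.
- by apply: (connect_trans (y := b)); apply: connect1; [apply: xb | exact: ba].
- by apply: (connect_trans (y := b)); apply: connect1; [apply: xb | exact: ba].
- by apply: connect1; apply: ya.
- by apply: connect1; apply: ya.
- exact: connect0.
- exact: connect1.
Qed.

Lemma double_star_acyclic c : ~~ is_cycle_in (double_star a b).2 c.
Proof.
apply: (acyclic_of_branch2 (a := a) (b := b)) => v u w uw vu vw.
have /andP [vV _] := eadj_sub double_star_sub vu.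
move: vV vu vw; rewrite !inE; case_eq_disj => vu vw; rewrite ?eqxx ?orbT //;
  by case/negP: uw; rewrite (double_star_leaf _ vu vw) // S56E !inE.
Qed.

Lemma double_star_leaves v : v \in (double_star a b).1 ->
  tree_deg (double_star a b).2 v = 1 -> v \in S56.
Proof.
rewrite S56E !inE; case_eq_disj; rewrite ?eqxx ?orbT // => deg1.
- have : 1 < tree_deg (double_star a b).2 a.
    by apply: (tree_deg_gt1 (e1 := [set a; Y0]) (e2 := [set a; Y1]));
      star_cases ab; rewrite ?inE ?set2_eqE.
  by rewrite deg1.
- have : 1 < tree_deg (double_star a b).2 b.
    by apply: (tree_deg_gt1 (e1 := [set b; X0]) (e2 := [set b; X1]));
      star_cases ab; rewrite ?inE ?set2_eqE.
  by rewrite deg1.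
Qed.

Lemma double_star_steiner : steiner_tree K56 S56 (double_star a b).
Proof.
split; last exact: double_star_leaves.
- split; [exact: double_star_edges | exact: double_star_connected
         | exact: double_star_acyclic].
- by apply/subsetP => v; rewrite S56E !inE; case_eq_disj; rewrite eqxx ?orbT.
Qed.

End DoubleStar.

Lemma S56_path_edges e : e \in S56_path.2 ->
  is_graph_edge K56 e && (e \subset S56_path.1).
Proof.
by rewrite !inE; case_eq_disj; rewrite graph_edge_set2 // subUset !sub1set !inE.
Qed.

Lemma S56_path_sub e : e \in S56_path.2 -> e \subset S56_path.1.
Proof. by move/S56_path_edges/andP => []. Qed.

Lemma S56_path_connected u v : u \in S56_path.1 -> v \in S56_path.1 ->
  exists p, path_in S56_path.2 u v p.
Proof.
move: u v; apply: (path_in_of_hub (h := X0)) => v; rewrite !inE; case_eq_disj.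
- exact: connect0.
- by apply: (connect_trans (y := Y1)); apply: connect1; rewrite /eadj !inE !set2_eqE.
- by apply: connect1; rewrite /eadj !inE !set2_eqE.
- by apply: connect1; rewrite /eadj !inE !set2_eqE.
Qed.

Lemma S56_path_acyclic c : ~~ is_cycle_in S56_path.2 c.
Proof.
have nbr_Y0 u : eadj S56_path.2 Y0 u -> u = X0.
  by elim/K56V_ind: u; rewrite /eadj !inE !set2_eqE.
have nbr_X1 u : eadj S56_path.2 X1 u -> u = Y1.
  by elim/K56V_ind: u; rewrite /eadj !inE !set2_eqE.
apply: (acyclic_of_branch2 (a := X0) (b := Y1)) => v u w uw vu vw.
have /andP [vV _] := eadj_sub S56_path_sub vu.
move: vV vu vw; rewrite !inE; case_eq_disj => // vu vw; case/negP: uw.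
- by rewrite (nbr_X1 _ vu) (nbr_X1 _ vw).
- by rewrite (nbr_Y0 _ vu) (nbr_Y0 _ vw).
Qed.

Lemma S56_path_steiner : steiner_tree K56 S56 S56_path.
Proof.
split; rewrite ?S56E //.
split; [exact: S56_path_edges | exact: S56_path_connected | exact: S56_path_acyclic].
Qed.

Definition K56_family (i : 'I_4) : {set K56V} * {set {set K56V}} :=
  match val i with
  | 0 => double_star X2 Y2 | 1 => double_star X3 Y3 | 2 => double_star X4 Y4
  | _ => S56_path
  end.

Lemma K56_family_steiner i : steiner_tree K56 S56 (K56_family i).
Proof.
case: i => [[|[|[|[|m]]]] lt_m]; rewrite /K56_family /=;
  by [apply: double_star_steiner; rewrite /star_centres !inE | exact: S56_path_steiner].
Qed.

Lemma K56_family_sub i e : e \in (K56_family i).2 -> e \subset (K56_family i).1.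
Proof. by have [[E_sub _ _] _ _] := K56_family_steiner i; move/E_sub/andP => []. Qed.

Lemma K56_family_leaf (i : 'I_4) : val i < 3 -> forall s u w, s \in S56 ->
  eadj (K56_family i).2 s u -> eadj (K56_family i).2 s w -> u = w.
Proof.
case: i => [[|[|[|[|m]]]] lt_m] //= _; rewrite /K56_family /=;
  by apply: double_star_leaf; rewrite /star_centres !inE.
Qed.

Lemma K56_family_disjoint i j : i != j ->
  (K56_family i).2 :&: (K56_family j).2 = set0 /\
  (K56_family i).1 :&: (K56_family j).1 = S56.
Proof.
case: i j => [[|[|[|[|m]]]] lt_m] // [[|[|[|[|n]]]] lt_n] //= ij;
  try by case/eqP: ij; apply: val_inj.
all: rewrite /K56_family /double_star /S56_path /=; split.
all: try (apply/setP => v; rewrite S56E; elim/K56V_ind: v; by rewrite !inE).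
all: apply: disjoint_setI0; rewrite disjoints_subset; apply/subsetP => e.
all: by rewrite !inE; case_eq_disj; rewrite !set2_eqE.
Qed.

(* One tree of each pair is a double star, in which all of [S56] are leaves. *)
Lemma K56_family_indep : compl_indep K56 S56 K56_family.
Proof.
split=> [|i j ij]; first exact: K56_family_steiner.
have [Eij Vij] := K56_family_disjoint ij; split=> // x1 x2 p1 p2 _ _ pi pj v vi vj.
have [i_star|i_path] := ltnP (val i) 3.
  exact: leaf_paths_meet_at_ends (@K56_family_sub i) (@K56_family_sub j) Vij
    (K56_family_leaf i_star) _ _ _ _ pi pj v vi vj.
have j_star : val j < 3.
  rewrite ltnNge; apply: contra ij => j_path; apply/eqP; apply: val_inj.
  by move: i_path j_path (ltn_ord i) (ltn_ord j) => /=; lia.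
rewrite setIC in Vij.
exact: leaf_paths_meet_at_ends (@K56_family_sub j) (@K56_family_sub i) Vij
  (K56_family_leaf j_star) _ _ _ _ pj pi v vj vi.
Qed.

Lemma K56_family_bound k (F : 'I_k -> {set K56V} * {set {set K56V}}) :
  compl_indep K56 S56 F -> k <= 4.
Proof.
move=> F_indep.
have [X0S X1S Y0S Y1S] : [/\ X0 \in S56, X1 \in S56, Y0 \in S56 & Y1 \in S56].
  by rewrite S56E !inE.
have := compl_indep_bipartite_bound K56_bipartite F_indep X0S X1S Y0S Y1S
  isT isT isT isT isT isT.
by rewrite card_is_inl card_not_is_inl !card_ord; lia.
Qed.

Theorem lemma3p9 : kappa_star_eq K56 S56 4.
Proof.
split; first by exists K56_family; exact: K56_family_indep.
exact: K56_family_bound.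
Qed.
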